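(* Let $\mathfrak{R}$ be a complete rewriting system on $\Sigma$ and let $(w,r_1,r_2)$ be a triple, where $\ell_1$ and $\ell_2$ denote the left-hand sides of the rules $r_1$ and $r_2$ respectively. Assume that $(w,r_1,r_2)$ is not $\tilde c$-defined. Then $\ell_1=xuy$ and $\ell_2=yvx$ for some words $u,v\in\Sigma^*$ and some non-empty words $x,y\in\Sigma^*$.
   Context: $\Sigma^*$ is the free monoid on $\Sigma$; a rewriting system is a set of rules $l\to r$ with $l,r\in\Sigma^*$, complete meaning terminating and confluent; a rule $l\to r$ can be applied to a word if $l$ is a subword (factor) of it. A triple $(w,r_1,r_2)$ consists of a word $w$ and rules $r_1,r_2\in\mathfrak{R}$ such that $r_1$ can be applied to some cyclic conjugate of $w$ and $r_2$ can be applied to some (possibly different) cyclic conjugate of $w$ (cyclic conjugates taken in $\Sigma^*$: $ab$ and $ba$). The triple is $\tilde c$-defined if some single cyclic conjugate of $w$ admits application of both $r_1$ and $r_2$. *)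

From mathcomp Require Import all_boot.
From Stdlib Require Import Relations.
Set Implicit Arguments. Unset Strict Implicit. Unset Printing Implicit Defensive.

Definition rule (Sigma : Type) := (seq Sigma * seq Sigma)%type.
Definition rewriting_system (Sigma : Type) := rule Sigma -> Prop.

Definition factor (Sigma : Type) (l t : seq Sigma) : Prop :=
  exists p s, t = p ++ l ++ s.

Definition step (Sigma : Type) (R : rewriting_system Sigma) (a b : seq Sigma) : Prop :=
  exists p s l r, R (l, r) /\ a = p ++ l ++ s /\ b = p ++ r ++ s.

Definition terminating (Sigma : Type) (R : rewriting_system Sigma) : Prop :=
  well_founded (fun b a => step R a b).

Definition confluent (Sigma : Type) (R : rewriting_system Sigma) : Prop :=
  forall a b c, clos_refl_trans _ (step R) a b -> clos_refl_trans _ (step R) a c ->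
    exists d, clos_refl_trans _ (step R) b d /\ clos_refl_trans _ (step R) c d.

Definition complete (Sigma : Type) (R : rewriting_system Sigma) : Prop :=
  terminating R /\ confluent R.

Definition cyclic_conjugate (Sigma : Type) (c w : seq Sigma) : Prop :=
  exists i, c = rot i w.

Definition applicable (Sigma : Type) (rl : rule Sigma) (t : seq Sigma) : Prop :=
  factor rl.1 t.

Definition is_triple (Sigma : Type) (R : rewriting_system Sigma)
    (w : seq Sigma) (r1 r2 : rule Sigma) : Prop :=
  R r1 /\ R r2 /\
  (exists c, cyclic_conjugate c w /\ applicable r1 c) /\
  (exists c, cyclic_conjugate c w /\ applicable r2 c).

Definition ctilde_defined (Sigma : Type) (w : seq Sigma) (r1 r2 : rule Sigma) : Prop :=
  exists c, cyclic_conjugate c w /\ applicable r1 c /\ applicable r2 c.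

From mathcomp Require Import all_boot.

Set Implicit Arguments.
Unset Strict Implicit.
Unset Printing Implicit Defensive.

(* Rotate the two conjugates so that they begin with l1 and with l2: l1 s1 = X Y
   and l2 s2 = Y X.  If l1 fits inside X, then l1 and l2 both occur in Y X;
   symmetrically if l2 fits inside Y.  Otherwise l1 = X N and l2 = Y N' with N, N'
   non-empty, and X = N' s2, Y = N s1 give l1 = N' s2 N and l2 = N s1 N'. *)

Section Words.

Variable T : Type.
Implicit Types A B C D c w l : seq T.

Lemma cat_eq_cat A B C D :
  A ++ B = C ++ D ->
  (exists M, C = A ++ M /\ B = M ++ D) \/
  (exists M, M <> [::] /\ A = C ++ M /\ D = M ++ B).
Proof.
elim: A C => [|a A IH] [|c C] /=.
- by move=> ->; left; exists [::].
- by move=> ->; left; exists (c :: C).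
- by move=> <-; right; exists (a :: A).
- case=> -> /IH [[M [-> ->]]|[M [M0 [-> ->]]]].
  + by left; exists M.
  + by right; exists M.
Qed.

Lemma cyclic_conjugateP c w :
  cyclic_conjugate c w <-> exists A B, w = A ++ B /\ c = B ++ A.
Proof.
split=> [[i ->]|[A [B [-> ->]]]].
- by exists (take i w), (drop i w); rewrite cat_take_drop.
- by exists (size A); rewrite rot_size_cat.
Qed.

Lemma cyclic_conjugate_rot A B w :
  cyclic_conjugate (A ++ B) w -> cyclic_conjugate (B ++ A) w.
Proof.
case/cyclic_conjugateP=> [P [Q [-> E]]]; apply/cyclic_conjugateP.
case/cat_eq_cat: E => [[M [-> ->]]|[M [_ [-> ->]]]].
- by exists (P ++ A), M; rewrite !catA.
- by exists M, (B ++ Q); rewrite !catA.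
Qed.

Lemma cyclic_conjugate_prefix l c w :
  cyclic_conjugate c w -> factor l c -> exists s, cyclic_conjugate (l ++ s) w.
Proof.
move=> Hc [p [s Ec]]; exists (s ++ p).
by rewrite catA; apply: cyclic_conjugate_rot; rewrite -Ec.
Qed.

Lemma cyclic_conjugate_common c1 c2 w :
  cyclic_conjugate c1 w -> cyclic_conjugate c2 w ->
  exists X Y, c1 = X ++ Y /\ c2 = Y ++ X.
Proof.
move=> /cyclic_conjugateP [A1 [B1 [-> ->]]] /cyclic_conjugateP [A2 [B2 [E ->]]].
case/cat_eq_cat: E => [[M [-> ->]]|[M [_ [-> ->]]]].
- by exists M, (B2 ++ A1); rewrite !catA.
- by exists (B1 ++ A2), M; rewrite !catA.
Qed.

Lemma factor_or_overlap l1 s1 l2 s2 X Y :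
  l1 ++ s1 = X ++ Y -> l2 ++ s2 = Y ++ X ->
  [\/ factor l1 (l2 ++ s2), factor l2 (l1 ++ s1) |
      exists x y u v, [/\ x <> [::], y <> [::], l1 = x ++ u ++ y & l2 = y ++ v ++ x]].
Proof.
move=> E1 E2; case/cat_eq_cat: (E1) => [[N [EX _]]|[N [N0 [EL1 EY]]]].
  by apply: Or31; rewrite E2 EX; exists Y, N; rewrite catA.
case/cat_eq_cat: (E2) => [[N' [EY' _]]|[N' [N0' [EL2 EX]]]].
  by apply: Or32; rewrite E1 EY'; exists X, N'; rewrite catA.
by apply: Or33; exists N', N, s2, s1; rewrite EL1 EL2 EX EY -!catA.
Qed.

End Words.

Theorem lemma5p4 (Sigma : Type) (R : rewriting_system Sigma)
  (w : seq Sigma) (r1 r2 : rule Sigma) :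
  complete R ->
  is_triple R w r1 r2 ->
  ~ ctilde_defined w r1 r2 ->
  exists x y u v : seq Sigma,
    x <> [::] /\ y <> [::] /\ r1.1 = x ++ u ++ y /\ r2.1 = y ++ v ++ x.
Proof.
move=> _ [_ [_ [[c1 [Hc1 Hl1]] [c2 [Hc2 Hl2]]]]] Hnd.
have [s1 Hd1] := cyclic_conjugate_prefix Hc1 Hl1.
have [s2 Hd2] := cyclic_conjugate_prefix Hc2 Hl2.
have [X [Y [E1 E2]]] := cyclic_conjugate_common Hd1 Hd2.
case: (factor_or_overlap E1 E2) => [Hf|Hf|[x [y [u [v [? ? ? ?]]]]]].
- by case: Hnd; exists (r2.1 ++ s2); split=> //; split=> //; exists [::], s2.
- by case: Hnd; exists (r1.1 ++ s1); split=> //; split=> //; exists [::], s1.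
- by exists x, y, u, v.
Qed.
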